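(* For a barcode $f$, the lifespan series $L(f)$, and hence all $L(f^{\wedge p})$ for $p \ge 1$, can be determined from $C^{\wedge}(f)$: if $f, f'$ are barcodes with $C^{\wedge}(f) = C^{\wedge}(f')$, then $L(f^{\wedge p}) = L(f'^{\wedge p})$ for all integers $p\ge 1$.
   Context: A barcode is a finite formal sum $f = \sum_{i=1}^n x^{\alpha_i}y^{\ell_i}$ with $n\ge 0$, $\alpha_i \in \mathbb{R}$, $\ell_i \in \mathbb{R}_{>0}$ (a finite multiset of bars). Its $p$-th exterior power ($p\ge1$) is $f^{\wedge p} = \sum_{1\le i_1<\cdots<i_p\le n} x^{\alpha_{i_1}+\cdots+\alpha_{i_p}}y^{\min\{\ell_{i_1},\ldots,\ell_{i_p}\}}$ (zero if $p>n$). The lifespan series is $L(f) = \sum_{i=1}^n x^{\ell_i}$, the critical series is $C(f) = \sum_i x^{\alpha_i} - \sum_i x^{\alpha_i+\ell_i}$ (finite integer combinations of symbols $x^g$, $g\in\mathbb{R}$), and $C^{\wedge}(f) = \sum_{p\ge1} C(f^{\wedge p})z^p$ with $z$ an indeterminate. *)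

From HB Require Import structures.
From mathcomp Require Import all_boot all_order all_algebra.
From mathcomp Require Import reals.
Set Implicit Arguments. Unset Strict Implicit. Unset Printing Implicit Defensive.
Import Order.TTheory GRing.Theory Num.Theory.
Local Open Scope ring_scope.

(* A bar x^alpha y^ell is the pair (alpha, ell); a barcode is a finite
   multiset of bars, represented by a list (order irrelevant for all the
   counting notions below). *)
Definition barcode {R : realType} (f : seq (R * R)) : Prop :=
  all (fun b => 0 < b.2) f.

(* All size-p sub-multisets, given as subsequences chosen by position
   (i.e. all index sets i_1 < ... < i_p). *)
Fixpoint subseqs_of_size {T : Type} (p : nat) (s : seq T) : seq (seq T) :=
  match p, s with
  | 0%N, _ => [:: [::]]
  | p'.+1, [::] => [::]
  | p'.+1, x :: s' => map (cons x) (subseqs_of_size p' s') ++ subseqs_of_size p s'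
  end.

Definition sum_alpha {R : realType} (t : seq (R * R)) : R :=
  \sum_(b <- t) b.1.

Definition min_ell {R : realType} (t : seq (R * R)) : R :=
  match t with
  | [::] => 0
  | b :: t' => foldr Num.min b.2 [seq c.2 | c <- t']
  end.

Definition ext_pow {R : realType} (p : nat) (f : seq (R * R)) : seq (R * R) :=
  [seq (sum_alpha t, min_ell t) | t <- subseqs_of_size p f].

(* Lifespan series L(f) = sum_i x^{ell_i}: coefficient of x^g. *)
Definition lifespan {R : realType} (f : seq (R * R)) : R -> nat :=
  fun g => count (fun b => b.2 == g) f.

(* Critical series C(f) = sum_i x^{alpha_i} - sum_i x^{alpha_i+ell_i}:
   coefficient of x^g. *)
Definition critical {R : realType} (f : seq (R * R)) : R -> int :=
  fun g => (count (fun b => b.1 == g) f)%:Z - (count (fun b => b.1 + b.2 == g) f)%:Z.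

(* C^wedge(f) = sum_{p>=1} C(f^{/\p}) z^p : coefficient of z^p. *)
Definition critical_ext {R : realType} (f : seq (R * R)) : nat -> R -> int :=
  fun p => if (1 <= p)%N then critical (ext_pow p f) else fun _ => 0.

From HB Require Import structures.
From mathcomp Require Import all_boot all_order all_algebra.
From mathcomp Require Import reals.
From mathcomp Require Import zify lra.
From Stdlib Require Import FunctionalExtensionality.
Set Implicit Arguments. Unset Strict Implicit. Unset Printing Implicit Defensive.
Import Order.TTheory GRing.Theory Num.Theory.
Local Open Scope ring_scope.

(* Write l_1 <= ... <= l_n for the sorted lifespans of f. The coefficient
   C(f^{/\p}) is the sum of x^{alpha} - x^{alpha + ell} over the bars of f^{/\p},
   so weighting it by the exponent recovers minus the total lifespan of f^{/\p},
   i.e. the sum of the minima of the p-subsets of the l_i, which equals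
   sum_i l_i * binomial(n - i, p - 1). For p = n this is l_1 > 0, which fixes n;
   the system is then triangular and recovers l_1, ..., l_n in turn. Finally the
   number of p-subsets with minimum g only depends on how many l_i are >= g and
   how many are > g. *)

Lemma perm_count_mem (T : eqType) (s1 s2 : seq T) :
  (forall x, count_mem x s1 = count_mem x s2) -> perm_eq s1 s2.
Proof. by move=> E; apply/allP => x _; rewrite /= E. Qed.

Lemma count_andNb_sub (T : Type) (a b : pred T) (s : seq T) : subpred b a ->
  count (fun x => a x && ~~ b x) s = (count a s - count b s)%N.
Proof.
move=> ba; elim: s => [|x s IH] //=.
case bx: (b x); first by rewrite (ba _ bx) /= add0n subnDl.
by rewrite andbT IH addnBA ?sub_count.
Qed.

Section SubseqsOfSize.
Variable T : Type.
Implicit Types (s : seq T) (q : pred T).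

Lemma subseqs_of_size_map (U : Type) (h : T -> U) p s :
  subseqs_of_size p (map h s) = map (map h) (subseqs_of_size p s).
Proof. by elim: s p => [|x s IH] [|p] //=; rewrite !IH map_cat -!map_comp. Qed.

Lemma all_subseqs_of_size q p s : all q s -> all (all q) (subseqs_of_size p s).
Proof.
elim: s p => [|x s IH] [|p] //= /andP[qx qs].
rewrite all_cat all_map IH // andbT.
by apply: sub_all (IH p qs) => t /= ->; rewrite qx.
Qed.

Lemma all_size_subseqs_of_size p s :
  all (fun t => size t == p) (subseqs_of_size p s).
Proof.
elim: s p => [|x s IH] [|p] //=.
by rewrite all_cat all_map IH andbT; apply: sub_all (IH p) => t.
Qed.

Lemma count_all_subseqs_of_size q p s :
  count (all q) (subseqs_of_size p s) = 'C(count q s, p).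
Proof.
elim: s p => [|x s IH] [|p] //=; first by rewrite bin0.
rewrite count_cat count_map IH.
case qx: (q x) => /=.
  rewrite add1n binS addnC -!IH; congr (_ + _)%N.
  by apply: eq_count => t /=; rewrite qx.
rewrite add0n -[RHS]add0n -(count_pred0 (subseqs_of_size p s)); congr (_ + _)%N.
by apply: eq_count => t /=; rewrite qx.
Qed.

Lemma size_subseqs_of_size p s : size (subseqs_of_size p s) = 'C(size s, p).
Proof.
rewrite -count_predT -(count_predT s) -count_all_subseqs_of_size.
by apply: eq_count => t; rewrite all_predT.
Qed.

Lemma subseqs_of_size_self s : subseqs_of_size (size s) s = [:: s].
Proof.
elim: s => [|x r IH] //=; rewrite IH.
have /size0nil -> // : size (subseqs_of_size (size r).+1 r) = 0%N.
by rewrite size_subseqs_of_size bin_small.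
Qed.

End SubseqsOfSize.

Section SumOfMinima.
Variable R : realDomainType.
Implicit Types (g x : R) (s t : seq R).

Definition min_seq t : R :=
  if t is x :: r then foldr Num.min x r else 0.

Lemma le_min_seq g t : t != [::] -> (g <= min_seq t) = all (fun y => g <= y) t.
Proof.
case: t => [|x r] // _ /=.
by elim: r => [|y r IH] /=; rewrite ?andbT // le_min IH andbCA.
Qed.

Lemma lt_min_seq g t : t != [::] -> (g < min_seq t) = all (fun y => g < y) t.
Proof.
case: t => [|x r] // _ /=.
by elim: r => [|y r IH] /=; rewrite ?andbT // lt_min IH andbCA.
Qed.

Lemma min_seq_cons_le x t : all (fun y => x <= y) t -> min_seq (x :: t) = x.
Proof.
elim: t => [|y t IH] //= /andP[le_xy le_xt].
by have /= -> := IH le_xt; rewrite min_r.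
Qed.

Lemma count_min_seq_eq g p s :
  count (fun t => min_seq t == g) (subseqs_of_size p.+1 s) =
  ('C(count (fun y => g <= y)%R s, p.+1) - 'C(count (fun y => g < y)%R s, p.+1))%N.
Proof.
rewrite -!count_all_subseqs_of_size -count_andNb_sub; last first.
  by move=> t; apply: sub_all => y; apply: ltW.
apply/eq_in_count => t /(allP (all_size_subseqs_of_size _ _)) /eqP size_t.
have t0 : t != [::] by rewrite -size_eq0 size_t.
by rewrite eq_le le_min_seq // -lt_min_seq // -leNgt andbC.
Qed.

Definition sum_mins p s : R := \sum_(t <- subseqs_of_size p s) min_seq t.

Lemma sum_mins_small p s : (size s < p)%N -> sum_mins p s = 0.
Proof.
move=> lt_sp; rewrite /sum_mins.
have /size0nil -> : size (subseqs_of_size p s) = 0%N.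
  by rewrite size_subseqs_of_size bin_small.
by rewrite big_nil.
Qed.

Lemma sum_mins_size s : sum_mins (size s) s = min_seq s.
Proof. by rewrite /sum_mins subseqs_of_size_self big_seq1. Qed.

Lemma sum_mins_cons p x r : path <=%R x r ->
  sum_mins p.+1 (x :: r) = x *+ 'C(size r, p) + sum_mins p.+1 r.
Proof.
move=> /(order_path_min le_trans) le_xr.
rewrite /sum_mins /= big_cat big_map -size_subseqs_of_size; congr (_ + _).
rewrite (eq_big_seq (fun=> x)) => [|t /(allP (all_subseqs_of_size p le_xr))].
  by rewrite big_const_seq count_predT iter_addr_0.
exact: min_seq_cons_le.
Qed.

Lemma sum_mins_perm p s s' : perm_eq s s' -> sum_mins p.+1 s = sum_mins p.+1 s'.
Proof.
move=> /permP eq_cnt; rewrite /sum_mins -!(big_map min_seq xpredT id).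
apply/perm_big/perm_count_mem => g; rewrite !count_map.
by rewrite !(eq_count (a2 := fun t => min_seq t == g)) // !count_min_seq_eq !eq_cnt.
Qed.

Lemma sorted_sum_mins_inj s s' : sorted <=%R s -> sorted <=%R s' ->
  size s = size s' -> (forall p, sum_mins p.+1 s = sum_mins p.+1 s') -> s = s'.
Proof.
elim: s s' => [|x r IH] [|x' r'] //= sorted_s sorted_s' /succn_inj eq_size E.
have eq_x : x = x'.
  have := E (size r).
  by rewrite !sum_mins_cons // !sum_mins_small -?eq_size // !binn !addr0 !mulr1n.
subst x'; congr (_ :: _).
apply: (IH r' (path_sorted sorted_s) (path_sorted sorted_s') eq_size) => p.
by have := E p; rewrite !sum_mins_cons // eq_size => /addrI.
Qed.

Lemma size_le_sum_mins s s' : all (> 0) s' ->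
  (forall p, sum_mins p.+1 s = sum_mins p.+1 s') -> (size s' <= size s)%N.
Proof.
case: s' => [|x' r'] // pos_s' E; rewrite leqNgt; apply/negP => lt_size.
have := E (size r'); rewrite sum_mins_small // -/(size (x' :: r')) sum_mins_size.
by move=> /eqP; rewrite eq_sym gt_eqF // lt_min_seq.
Qed.

Lemma perm_eq_sum_mins s s' :
  all (> 0) s -> all (> 0) s' ->
  (forall p, sum_mins p.+1 s = sum_mins p.+1 s') -> perm_eq s s'.
Proof.
move=> pos_s pos_s' E; apply/(perm_sortP le_total le_trans le_anti).
apply: sorted_sum_mins_inj; rewrite ?sort_sorted //; try exact: le_total.
  by rewrite !size_sort; apply/eqP; rewrite eqn_leq !size_le_sum_mins // => p; rewrite E.
by move=> p; rewrite !(sum_mins_perm p (permEl (perm_sort _ _))).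
Qed.

End SumOfMinima.

Lemma critical_sum_snd (R : realType) (h h' : seq (R * R)) :
  critical h = critical h' -> \sum_(b <- h) b.2 = \sum_(b <- h') b.2.
Proof.
move=> E.
have balance g :
  (count (fun b => b.1 == g) h + count (fun b => (b.1 + b.2)%R == g) h' =
   count (fun b => b.1 == g) h' + count (fun b => (b.1 + b.2)%R == g) h)%N.
  by have := congr1 (fun c => c g) E; rewrite /critical; lia.
have perm_bd : perm_eq (map fst h ++ map (fun b => b.1 + b.2) h')
                       (map fst h' ++ map (fun b => b.1 + b.2) h).
  by apply: perm_count_mem => g; rewrite !count_cat !count_map; exact: balance.
have := perm_big _ perm_bd : \sum_(x <- _) x = \sum_(x <- _) x.
by rewrite !big_cat !big_map !big_split /=; lra.
Qed.

Lemma sum_snd_ext_pow (R : realType) p (f : seq (R * R)) :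
  \sum_(b <- ext_pow p f) b.2 = sum_mins p (map snd f).
Proof.
rewrite /ext_pow big_map /sum_mins subseqs_of_size_map big_map.
by apply: eq_bigr => -[].
Qed.

Lemma lifespan_ext_pow (R : realType) p (f : seq (R * R)) g :
  lifespan (ext_pow p f) g =
  count (fun t => min_seq t == g) (subseqs_of_size p (map snd f)).
Proof.
rewrite /lifespan /ext_pow count_map subseqs_of_size_map count_map.
by apply: eq_count => -[].
Qed.

Theorem proposition9 (R : realType) (f f' : seq (R * R)) :
  barcode f -> barcode f' ->
  critical_ext f = critical_ext f' ->
  forall p : nat, (1 <= p)%N -> lifespan (ext_pow p f) = lifespan (ext_pow p f').
Proof.
move=> bar_f bar_f' E [|p] // _.
have E_mins q : sum_mins q.+1 (map snd f) = sum_mins q.+1 (map snd f').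
  rewrite -!sum_snd_ext_pow; apply: critical_sum_snd.
  by have := congr1 (fun c => c q.+1) E; rewrite /critical_ext.
have pos_snd (h : seq (R * R)) : barcode h -> all (> 0) (map snd h) by rewrite all_map.
have /permP eq_cnt := perm_eq_sum_mins (pos_snd _ bar_f) (pos_snd _ bar_f') E_mins.
apply: functional_extensionality => g.
by rewrite !lifespan_ext_pow !count_min_seq_eq !eq_cnt.
Qed.
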